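(* Let $G_n$ be a connected graph with $n$ nodes whose degrees satisfy $\max_i d_i/\min_i d_i\le C$ for some constant $C$. Then for every $\epsilon\in(0,1)$, $$t_{\mathrm{cov}}(1-\epsilon)\;\ge\;\frac{n}{2C}\log\big((1-\epsilon)n\big).$$
   Context: The averaging process on a finite, undirected, connected graph $G=(V,E)$, $V=\{1,\dots,n\}$: the state vector $v(t)\in\mathbb R^n$, $t=0,1,2,\dots$, starts from a given $v(0)$; at each step $t\ge 1$ an edge $\{i,j\}\in E$ is chosen uniformly at random (independently of all previous choices) and both $v_i$ and $v_j$ are replaced by $(v_i+v_j)/2$, all other coordinates unchanged. $d_i$ is the degree of vertex $i$. For $w\in\mathbb R^n$ let $n(w)=\#\{i:w_i\neq0\}$. For $\alpha\in(0,1]$ and a vertex $i$, $t_{\mathrm{cov}}(\alpha,i)$ is the expectation of the first time $t$ at which $n(v(t))\ge\alpha n$ for the process started at $v(0)=e_i$, and $t_{\mathrm{cov}}(\alpha)=\max_i t_{\mathrm{cov}}(\alpha,i)$. Logarithms are natural. *)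

From HB Require Import structures.
From mathcomp Require Import all_boot all_order all_algebra.
From mathcomp Require Import all_classical all_reals all_analysis.
Set Implicit Arguments. Unset Strict Implicit. Unset Printing Implicit Defensive.
Import Order.TTheory GRing.Theory Num.Theory.
Local Open Scope ring_scope.

Section Averaging.
Variables (R : realType) (n : nat) (adj : rel 'I_n).

Definition deg (i : 'I_n) : nat := #|[set j | adj i j]|.

(* an undirected edge {i,j} is represented by the ordered pair (i,j), i < j *)
Definition edges : {set 'I_n * 'I_n} :=
  [set p : 'I_n * 'I_n | ((p.1 : nat) < p.2)%N && adj p.1 p.2].

Definition avg_step (v : 'I_n -> R) (p : 'I_n * 'I_n) : 'I_n -> R :=
  fun k => if (k == p.1) || (k == p.2) then (v p.1 + v p.2) / 2 else v k.

Definition run (v0 : 'I_n -> R) (s : seq ('I_n * 'I_n)) : 'I_n -> R :=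
  foldl avg_step v0 s.

Definition nsupp (w : 'I_n -> R) : nat := #|[set i | w i != 0]|.

Definition covered (alpha : R) (w : 'I_n -> R) : bool :=
  alpha * n%:R <= (nsupp w)%:R.

(* the first time t at which n(v(t)) >= alpha n equals size s *)
Definition first_hit (alpha : R) (v0 : 'I_n -> R) (s : seq ('I_n * 'I_n)) : bool :=
  covered alpha (run v0 s) &&
  [forall u : 'I_(size s), ~~ covered alpha (run v0 (take u s))].

(* P(T = t): edges chosen i.i.d. uniformly from the edge set *)
Definition prob_hit_at (alpha : R) (v0 : 'I_n -> R) (t : nat) : R :=
  (#|[set s : t.-tuple ('I_n * 'I_n) |
        all (fun p => p \in edges) s && first_hit alpha v0 s]|)%:R
  / (#|edges|%:R ^+ t).

Definition exp_hit (alpha : R) (v0 : 'I_n -> R) : \bar R :=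
  (\sum_(t <oo) ((t%:R * prob_hit_at alpha v0 t)%:E))%E.

Definition unit_vec (i : 'I_n) : 'I_n -> R := fun k => if k == i then 1 else 0.

Definition tcov_at (alpha : R) (i : 'I_n) : \bar R := exp_hit alpha (unit_vec i).

Definition tcov (alpha : R) : \bar R :=
  (\big[Order.max/-oo]_(i : 'I_n) tcov_at alpha i)%E.

End Averaging.

(* Started from a nonnegative vector, averaging along an edge leaves the support
   unchanged unless the edge crosses the cut of the support, in which case both
   endpoints join it.  So from e_i the support performs a set-valued Markov chain
   that gains one vertex exactly on crossing edges.  A support S has at most
   vol(S) <= |S| max_i d_i <= 2C |S| |E| / n crossing edges, hence the potential
   Phi(S) = (n / 2C) sum_{|S| <= j < alpha n} 1/j drops by at most 1 per step in
   expectation, and an optional-stopping argument gives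
   E[T] >= Phi({i}) >= (n / 2C) log (alpha n).  The expectation only sees finite
   hitting times, so we also need T < oo almost surely: by connectivity every
   uncovered support has a crossing edge, so 2^(n - |S|) contracts by a factor
   1 - 1/(2|E|) per step and the survival probability decays geometrically. *)

From HB Require Import structures.
From mathcomp Require Import all_boot all_order all_algebra.
From mathcomp Require Import all_classical all_reals all_analysis.
From mathcomp Require Import ring lra.
Import Order.TTheory GRing.Theory Num.Theory numFieldNormedType.Exports.
Local Open Scope ring_scope.
Set Implicit Arguments. Unset Strict Implicit. Unset Printing Implicit Defensive.

Section HittingTime.
Variables (R : realType) (X : Type) (E : finType) (D : {set E}).
Variables (step : X -> E -> X) (stop : pred X).
Hypothesis D_gt0 : (0 < #|D|)%N.

Definition mean_step (g : X -> R) (x : X) : R :=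
  #|D|%:R^-1 * \sum_(e in D) g (step x e).

Fixpoint hit_prob (t : nat) (x : X) : R :=
  if t is t'.+1 then (if stop x then 0 else mean_step (hit_prob t') x)
  else (stop x)%:R.

Fixpoint survival (t : nat) (x : X) : R :=
  if t is t'.+1 then (if stop x then 0 else mean_step (survival t') x) else 1.

Lemma mean_stepD g h x :
  mean_step (fun y => g y + h y) x = mean_step g x + mean_step h x.
Proof. by rewrite /mean_step big_split mulrDr. Qed.

Lemma mean_stepZ k g x : mean_step (fun y => k * g y) x = k * mean_step g x.
Proof. by rewrite /mean_step -mulr_sumr mulrCA. Qed.

Lemma mean_step_sum N (g : nat -> X -> R) x :
  mean_step (fun y => \sum_(0 <= t < N) g t y) x = \sum_(0 <= t < N) mean_step (g t) x.
Proof. by rewrite /mean_step exchange_big mulr_sumr. Qed.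

Lemma mean_step_cst k x : mean_step (fun=> k) x = k.
Proof.
by rewrite /mean_step sumr_const -[k *+ _]mulr_natl mulrA mulVf ?mul1r // pnatr_eq0 -lt0n.
Qed.

Lemma ler_mean_step g h x :
  (forall e, e \in D -> g (step x e) <= h (step x e)) -> mean_step g x <= mean_step h x.
Proof. by move=> gh; rewrite ler_wpM2l ?invr_ge0 // ler_sum. Qed.

Lemma mean_step_ge0 g x : (forall e, e \in D -> 0 <= g (step x e)) -> 0 <= mean_step g x.
Proof. by move=> g_ge0; rewrite mulr_ge0 ?invr_ge0 // sumr_ge0. Qed.

Lemma hit_prob_ge0 t x : 0 <= hit_prob t x.
Proof.
elim: t x => [|t IHt] x /=; first exact: ler0n.
by case: ifP => // _; apply: mean_step_ge0.
Qed.

Lemma survival_ge0 t x : 0 <= survival t x.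
Proof. by elim: t x => [|t IHt] x //=; case: ifP => // _; apply: mean_step_ge0. Qed.

Lemma sum_hit_prob_survival N x : \sum_(0 <= t < N) hit_prob t x + survival N x = 1.
Proof.
elim: N x => [|N IHN] x; first by rewrite big_geq // add0r.
rewrite big_nat_recl //=; case: ifP => stx.
  by rewrite big1 ?addr0 // => t _ /=; rewrite stx.
rewrite add0r -mean_step_sum -mean_stepD.
rewrite -[RHS](mean_step_cst 1 x); congr mean_step; apply: funext => y; exact: IHN.
Qed.

Section Lyapunov.
Variables (phi : X -> R) (B : R).
Hypothesis phi_stop : forall x, stop x -> phi x <= 0.
Hypothesis phi_drift : forall x, ~~ stop x -> phi x <= 1 + mean_step phi x.
Hypothesis phi_le : forall x, phi x <= B.

Lemma lyapunov_le N x :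
  phi x <= \sum_(0 <= t < N) t%:R * hit_prob t x + (N%:R + B) * survival N x.
Proof.
elim: N x => [|N IHN] x; first by rewrite big_geq // add0r add0r mulr1.
have rhsS y : \sum_(0 <= t < N) t.+1%:R * hit_prob t y + (N.+1%:R + B) * survival N y =
    \sum_(0 <= t < N) t%:R * hit_prob t y + (N%:R + B) * survival N y + 1.
  rewrite -[X in _ = _ + X](sum_hit_prob_survival N y).
  under eq_bigr do rewrite -natr1 mulrDl mul1r.
  by rewrite big_split -natr1 /=; ring.
rewrite big_nat_recl //= mul0r add0r; have [stx|nstx] := boolP (stop x).
  by rewrite big1 ?mulr0 ?addr0 ?phi_stop // => t _; rewrite mulr0.
under eq_bigr do rewrite -mean_stepZ.
rewrite -mean_step_sum -mean_stepZ -mean_stepD.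
apply: le_trans (phi_drift nstx) _.
rewrite -[X in X + _](mean_step_cst 1 x) -mean_stepD.
by apply: ler_mean_step => e _; rewrite rhsS addrC lerD2r.
Qed.

Lemma lyapunov_le_trunc N K x : (N <= K)%N ->
  phi x - B * survival N x - N%:R * survival K x <=
  \sum_(0 <= t < K) t%:R * hit_prob t x.
Proof.
move=> NK; rewrite (big_cat_nat (leq0n N) NK) /=.
have tail_ge : N%:R * (survival N x - survival K x) <=
    \sum_(N <= t < K) t%:R * hit_prob t x.
  have -> : survival N x - survival K x = \sum_(N <= t < K) hit_prob t x.
    have := sum_hit_prob_survival K x; have := sum_hit_prob_survival N x.
    by rewrite (big_cat_nat (leq0n N) NK) /=; lra.
  rewrite mulr_sumr; apply: ler_sum_nat => t /andP[Nt _].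
  by rewrite ler_wpM2r ?hit_prob_ge0 ?ler_nat.
have := lyapunov_le N x; lra.
Qed.

Lemma lyapunov_le_mean_hit x : (survival^~ x @ \oo --> 0)%classic ->
  ((phi x)%:E <= \sum_(t <oo) (t%:R * hit_prob t x)%:E)%E.
Proof.
move=> survival_cvg0; apply/lee_subgt0Pr => d d_gt0.
have d2_gt0 : 0 < d / 2 by rewrite divr_gt0.
have B_survival_cvg0 : ((fun N => B * survival N x) @ \oo --> 0)%classic.
  by have := cvgM (cvg_cst B) survival_cvg0; rewrite mulr0; apply.
have [N _ leN] := cvgr0_norm_le _ B_survival_cvg0 _ d2_gt0.
have N_survival_cvg0 : ((fun K => N%:R * survival K x) @ \oo --> 0)%classic.
  by have := cvgM (cvg_cst (N%:R : R)) survival_cvg0; rewrite mulr0; apply.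
have [K0 _ leK0] := cvgr0_norm_le _ N_survival_cvg0 _ d2_gt0.
pose K := maxn N K0.
have /(le_trans (ler_norm _)) BN_le := leN N (leqnn N).
have /(le_trans (ler_norm _)) NK_le := leK0 K (leq_maxr N K0).
apply: le_trans (nneseries_lim_ge K _); last first.
  by move=> t _ _; rewrite lee_fin mulr_ge0 ?hit_prob_ge0.
rewrite sumEFin lee_fin; have := lyapunov_le_trunc x (leq_maxl N K0).
lra.
Qed.

End Lyapunov.

Section GeometricTail.
Variables (psi : X -> R) (lam : R) (inv : pred X).
Hypothesis psi_ge1 : forall x, 1 <= psi x.
Hypothesis lam_ge0 : 0 <= lam.
Hypothesis inv_step : forall x e, inv x -> inv (step x e).
Hypothesis psi_contract :
  forall x, inv x -> ~~ stop x -> mean_step psi x <= lam * psi x.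

Lemma survival_le_geometric N x : inv x -> survival N x <= lam ^+ N * psi x.
Proof.
elim: N x => [|N IHN] x inv_x /=; first by rewrite expr0 mul1r.
have [stx|nstx] := boolP (stop x).
  by rewrite mulr_ge0 ?exprn_ge0 // (le_trans ler01).
apply: le_trans (_ : mean_step (fun y => lam ^+ N * psi y) x <= _).
  by apply: ler_mean_step => e _; apply: IHN; apply: inv_step.
by rewrite mean_stepZ exprSr -mulrA ler_wpM2l ?exprn_ge0 ?psi_contract.
Qed.

Lemma survival_cvg0 x : lam < 1 -> inv x -> (survival^~ x @ \oo --> 0)%classic.
Proof.
move=> lam_lt1 inv_x.
have geometric_cvg0 : ((fun N => lam ^+ N * psi x) @ \oo --> 0)%classic.
  rewrite -(mul0r (psi x)); apply: cvgM; last exact: cvg_cst.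
  by apply: cvg_expr; rewrite ger0_norm.
apply: (squeeze_cvgr _ (cvg_cst 0) geometric_cvg0); apply: nearW => N.
by rewrite survival_ge0 survival_le_geometric.
Qed.

End GeometricTail.
End HittingTime.

Section Bridge.
Variables (R : realType) (n : nat) (adj : rel 'I_n) (alpha : R).
Local Notation T := ('I_n * 'I_n)%type.

Lemma forall_ord_all_iota k (Q : pred nat) : [forall u : 'I_k, Q u] = all Q (iota 0 k).
Proof.
apply/forallP/allP => [Qk j | Qk u]; last by apply: Qk; rewrite mem_iota ltn_ord.
by rewrite mem_iota add0n => /andP[_ jk]; exact: (Qk (Ordinal jk)).
Qed.

Lemma first_hit_cons (v : 'I_n -> R) (e : T) (s : seq T) : first_hit alpha v (e :: s) =
  ~~ covered alpha v && first_hit alpha (avg_step v e) s.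
Proof.
rewrite /first_hit.
rewrite (forall_ord_all_iota _ (fun u => ~~ covered alpha (run v (take u (e :: s))))).
rewrite (forall_ord_all_iota _ (fun u => ~~ covered alpha (run (avg_step v e) (take u s)))).
rewrite /= -(addn0 1%N) iotaDl all_map.
by rewrite andbCA; congr (_ && (_ && _)); apply: eq_all.
Qed.

Definition hit_count (t : nat) (v : 'I_n -> R) : nat :=
  \sum_(s : t.-tuple T) (all (fun p => p \in edges adj) s && first_hit alpha v s).

Lemma card_first_hit t (v : 'I_n -> R) :
  #|[set s : t.-tuple T | all (fun p => p \in edges adj) s && first_hit alpha v s]| =
  hit_count t v.
Proof. by rewrite -sum1_card big_mkcond; apply: eq_bigr => s _; rewrite inE; case: ifP. Qed.

Lemma hit_count0 (v : 'I_n -> R) : hit_count 0 v = covered alpha v.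
Proof.
rewrite /hit_count (big_pred1 [tuple]) /=; last by move=> s; rewrite [s]tuple0 /= eqxx.
rewrite /first_hit /=; suff -> : [forall u : 'I_0, ~~ covered alpha v] by rewrite andbT.
by apply/forallP => -[].
Qed.

Lemma hit_countS t (v : 'I_n -> R) : hit_count t.+1 v =
  if covered alpha v then 0%N else \sum_(e in edges adj) hit_count t (avg_step v e).
Proof.
rewrite /hit_count (reindex (fun p : T * t.-tuple T => [tuple of p.1 :: p.2])) /=.
  rewrite -(pair_bigA _ (fun e (s : t.-tuple T) =>
    nat_of_bool (all (fun p => p \in edges adj) (e :: s) && first_hit alpha v (e :: s)))) /=.
  have [cov_v|ncov_v] := ifP.
    by apply: big1 => e _; apply: big1 => s _; rewrite first_hit_cons cov_v andbF.
  rewrite [RHS]big_mkcond; apply: eq_bigr => e _.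
  case: ifP => _; last by apply: big1.
  by apply: eq_bigr => s _; rewrite first_hit_cons ncov_v.
exists (fun s : t.+1.-tuple T => (thead s, [tuple of behead s])) => [[e s] _|s _] /=.
  by congr (_, _); apply: val_inj.
by rewrite -tuple_eta.
Qed.

End Bridge.

Section Spread.
Variable n : nat.
Implicit Types (S : {set 'I_n}) (e : 'I_n * 'I_n).

Definition crossing S e : bool := (e.1 \in S) != (e.2 \in S).

Definition spread S e : {set 'I_n} := if crossing S e then e.1 |: (e.2 |: S) else S.

Lemma card_spread S e : crossing S e -> #|spread S e| = #|S|.+1.
Proof.
move=> cr; rewrite /spread cr; move: cr; rewrite /crossing.
case e1S: (e.1 \in S); case e2S: (e.2 \in S) => //= _.
  by rewrite cardsU1 setU1r // cardsU1 e2S.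
have e12 : e.1 != e.2 by apply: contraFneq e1S => ->.
by rewrite cardsU1 !inE negb_or e12 e1S cardsU1 e2S.
Qed.

Lemma spread_gt0 S e : (0 < #|S|)%N -> (0 < #|spread S e|)%N.
Proof.
by move=> S_gt0; case cr: (crossing S e); [rewrite card_spread ?cr | rewrite /spread cr].
Qed.

Variable R : realType.

Definition supp (v : 'I_n -> R) : {set 'I_n} := [set i | v i != 0].

Lemma supp_avg_step (v : 'I_n -> R) e : (forall i, 0 <= v i) ->
  supp (avg_step v e) = spread (supp v) e.
Proof.
move=> v_ge0.
have avg_neq0 : ((v e.1 + v e.2) / 2 != 0) = (v e.1 != 0) || (v e.2 != 0).
  by rewrite mulf_eq0 invr_eq0 pnatr_eq0 orbF paddr_eq0 // negb_and.
apply/setP => k; rewrite /spread /crossing /supp /avg_step !inE.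
have [-> | k1] := eqVneq k e.1; last have [-> | k2] := eqVneq k e.2.
- rewrite /= avg_neq0; case: ifP; rewrite !inE ?eqxx //;
  by case: (v e.1 != 0); case: (v e.2 != 0).
- rewrite /= avg_neq0; case: ifP; rewrite !inE ?eqxx ?orbT //;
  by case: (v e.1 != 0); case: (v e.2 != 0).
- by rewrite /=; case: ifP; rewrite !inE ?(negbTE k1) ?(negbTE k2).
Qed.

End Spread.

Section Degrees.
Variables (n : nat) (adj : rel 'I_n).
Hypotheses (adj_sym : symmetric adj) (adj_irr : irreflexive adj).
Local Notation T := ('I_n * 'I_n)%type.

Lemma sum_deg (Q : pred 'I_n) :
  (\sum_(i | Q i) deg adj i)%N = #|[set p : T | Q p.1 && adj p.1 p.2]|.
Proof.
rewrite -sum1_card (eq_bigl (fun p : T => Q p.1 && adj p.1 p.2)) => [|p]; last first.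
  by rewrite inE.
rewrite -(pair_big_dep Q adj (fun _ _ => 1%N)) /=.
by apply: eq_bigr => i _; rewrite /deg -sum1_card; apply: eq_bigl => j; rewrite inE.
Qed.

Lemma card_crossing_le_deg (S : {set 'I_n}) :
  (#|[set e in edges adj | crossing S e]| <= \sum_(i in S) deg adj i)%N.
Proof.
pose orient (e : T) := if e.1 \in S then e else (e.2, e.1).
rewrite sum_deg -(@card_in_imset _ _ orient [set e in edges adj | crossing S e]); last first.
  move=> [a b] [c d]; rewrite /edges !inE /orient /=.
  move=> /andP[/andP[ab _] _] /andP[/andP[cd _] _].
  by case: (a \in S); case: (c \in S) => -[? ?]; subst => //;
    have := ltn_trans ab cd; rewrite ltnn.
apply/subset_leq_card/fintype.subsetP => _ /imsetP[[a b] + ->].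
rewrite /edges !inE /orient /crossing /= => /andP[/andP[_ ab] crossing_ab].
by case: ifP crossing_ab => aS; rewrite /= ?aS ?ab // adj_sym ab andbT; case: (b \in S).
Qed.

Lemma sum_deg_le : (\sum_i deg adj i <= 2 * #|edges adj|)%N.
Proof.
rewrite sum_deg.
apply: (@leq_trans #|edges adj :|: [set (e.2, e.1) | e in edges adj]|).
  apply/subset_leq_card/fintype.subsetP => -[a b]; rewrite /edges !inE /= => ab.
  have [lt_ab|lt_ba|eq_ab] := ltngtP a b; first by rewrite ab.
    by apply/imsetP; exists (b, a); rewrite // !inE /= lt_ba adj_sym.
  by move: ab; rewrite (val_inj eq_ab) adj_irr.
by rewrite mul2n -addnn (leq_trans (leq_card_setU _ _)) // leq_add2l leq_imset_card.
Qed.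

Lemma degree_ratio_crossing_le (R : realType) (C : R) : 0 < C ->
    (forall i j : 'I_n, (deg adj i)%:R <= C * (deg adj j)%:R) ->
  forall S : {set 'I_n},
  n%:R / (2 * C) * #|[set e in edges adj | crossing S e]|%:R <= #|S|%:R * #|edges adj|%:R.
Proof.
move=> C_gt0 deg_ratio S.
have deg_le i : n%:R * (deg adj i)%:R <= C * (2 * #|edges adj|)%:R.
  apply: le_trans (_ : \sum_(j : 'I_n) C * (deg adj j)%:R <= _).
    by rewrite mulr_natl -[n in _ *+ n]card_ord -sumr_const ler_sum.
  by rewrite -mulr_sumr -natr_sum (ler_wpM2l (ltW C_gt0)) // ler_nat sum_deg_le.
have vol_le : n%:R * (\sum_(i in S) deg adj i)%:R <=
    #|S|%:R * (C * (2 * #|edges adj|)%:R).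
  rewrite natr_sum mulr_sumr; apply: le_trans (ler_sum _ (fun i _ => deg_le i)) _.
  by rewrite sumr_const mulr_natl.
rewrite mulrAC ler_pdivrMr ?mulr_gt0 //.
have -> : #|S|%:R * #|edges adj|%:R * (2 * C) = #|S|%:R * (C * (2 * #|edges adj|)%:R).
  by rewrite natrM; ring.
by apply: le_trans vol_le; rewrite ler_wpM2l // ler_nat card_crossing_le_deg.
Qed.

Hypothesis adj_connected : forall i j : 'I_n, connect adj i j.

Lemma exists_crossing_edge (S : {set 'I_n}) : (0 < #|S| < n)%N ->
  exists2 e, e \in edges adj & crossing S e.
Proof.
case/andP => /card_gt0P[i iS] S_lt_n.
have /subsetPn[j _ jNS] : ~~ ([set: 'I_n] \subset S).
  by apply: contraL S_lt_n => /subset_leq_card; rewrite cardsT card_ord leqNgt.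
case: (pickP [pred e | (e \in edges adj) && crossing S e]) => [e /andP[eE cr]|no_cross].
  by exists e.
have S_closed : fingraph.closed adj (mem S).
  move=> x y xy; have [lt_xy|lt_yx|eq_xy] := ltngtP x y.
  - by apply/eqP; move/negbT: (no_cross (x, y)); rewrite /edges !inE lt_xy xy negbK.
  - apply/esym/eqP; move/negbT: (no_cross (y, x)).
    by rewrite /edges !inE lt_yx adj_sym xy negbK.
  - by move: xy; rewrite (val_inj eq_xy) adj_irr.
by move: (closed_connect S_closed (adj_connected i j)); rewrite iS (negbTE jNS).
Qed.

End Degrees.

Section HarmonicTail.
Variables (R : realType) (n : nat) (alpha : R).

Definition harm_tail (k : nat) : R :=
  \sum_(k <= j < n | j%:R < alpha * n%:R) j%:R^-1.

Lemma harm_tail_ge0 k : 0 <= harm_tail k.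
Proof. by apply: sumr_ge0 => j _; rewrite invr_ge0. Qed.

Lemma harm_tail_le k l : (k <= l)%N -> harm_tail l <= harm_tail k.
Proof.
move=> kl; have [l_le_n|n_lt_l] := leqP l n.
  by rewrite /harm_tail (big_cat_nat kl l_le_n) lerDr sumr_ge0 // => j _; rewrite invr_ge0.
by rewrite [harm_tail l]big_geq ?harm_tail_ge0 // ltnW.
Qed.

Lemma harm_tailE k : (k < n)%N -> k%:R < alpha * n%:R ->
  harm_tail k = k%:R^-1 + harm_tail k.+1.
Proof. by move=> kn k_lt; rewrite /harm_tail big_ltn_cond // k_lt. Qed.

Lemma harm_tail_eq0 k : alpha * n%:R <= k%:R -> harm_tail k = 0.
Proof.
move=> k_ge; rewrite /harm_tail big_nat_cond big1 // => j /andP[/andP[kj _]].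
by rewrite ltNge (le_trans k_ge) // ler_nat.
Qed.

End HarmonicTail.

Lemma ln_le_harmonic (R : realType) N (x : R) : 0 < x <= N%:R ->
  ln x <= \sum_(1 <= j < N | j%:R < x) j%:R^-1.
Proof.
elim: N x => [|N IHN] x /andP[x_gt0 x_le]; first by move: x_le; rewrite leNgt x_gt0.
have [N0|N_gt0] := posnP N.
  by rewrite N0 big_geq // ln_le0 //; rewrite N0 in x_le.
have N_gt0R : (0 : R) < N%:R by rewrite ltr0n.
have full_sum (y : R) : N%:R <= y ->
    \sum_(1 <= j < N | j%:R < y) j%:R^-1 = \sum_(1 <= j < N) (j%:R : R)^-1.
  move=> N_le_y; rewrite big_nat_cond [RHS]big_nat_cond; apply: eq_bigl => j.
  case/boolP: (1 <= j < N)%N => //= /andP[_ jN].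
  by rewrite (lt_le_trans _ N_le_y) // ltr_nat.
rewrite big_mkcond big_nat_recr //= -big_mkcond /=.
have [x_leN | N_lt_x] := lerP x N%:R.
  by rewrite addr0 IHN // x_gt0.
rewrite full_sum; last exact: ltW.
have := IHN N%:R; rewrite full_sum // lexx N_gt0R => /(_ isT) lnN_le.
have lnx_le : ln x <= ln N.+1%:R by rewrite ler_ln ?posrE ?ltr0n.
apply: le_trans lnx_le _.
have -> : (N.+1%:R : R) = N%:R * (1 + N%:R^-1).
  by rewrite mulrDr mulr1 mulfV ?gt_eqF // -natr1.
rewrite lnM ?posrE ?addr_gt0 ?invr_gt0 // lerD // le_ln1Dx //.
by rewrite (lt_trans (ltrN10 R)) ?invr_gt0.
Qed.

Section SupportChain.
Variables (R : realType) (n : nat) (adj : rel 'I_n) (alpha : R).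

Definition set_covered (S : {set 'I_n}) : bool := alpha * n%:R <= #|S|%:R.

Local Notation mean := (mean_step (edges adj) (@spread n)).
Local Notation M := (#|edges adj|%:R : R).

Lemma avg_step_ge0 (v : 'I_n -> R) e :
  (forall i, 0 <= v i) -> forall i, 0 <= avg_step v e i.
Proof. by move=> v_ge0 i; rewrite /avg_step; case: ifP; rewrite ?divr_ge0 ?addr_ge0. Qed.

Lemma prob_hit_at_supp t (v : 'I_n -> R) : (forall i, 0 <= v i) ->
  prob_hit_at adj alpha v t = hit_prob R (edges adj) (@spread n) set_covered t (supp v).
Proof.
elim: t v => [|t IHt] v v_ge0.
  by rewrite /prob_hit_at card_first_hit hit_count0 expr0 divr1.
rewrite /prob_hit_at card_first_hit hit_countS /=.
have -> : covered alpha v = set_covered (supp v) by [].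
case: ifP => _; first by rewrite mul0r.
rewrite /mean_step natr_sum exprS invfM mulrCA mulr_suml; congr (_ * _).
apply: eq_bigr => e _; rewrite -supp_avg_step // -IHt; last exact: avg_step_ge0.
by rewrite /prob_hit_at card_first_hit.
Qed.

Hypothesis alpha_le1 : alpha <= 1.

Lemma card_lt_uncovered (S : {set 'I_n}) : ~~ set_covered S -> (#|S| < n)%N.
Proof.
rewrite /set_covered -ltNge => S_lt; rewrite -(ltr_nat R) (lt_le_trans S_lt) //.
by rewrite ler_piMl.
Qed.

Lemma harm_potential_drift (c : R) (S : {set 'I_n}) : (0 < #|edges adj|)%N ->
  c * #|[set e in edges adj | crossing S e]|%:R <= #|S|%:R * M ->
  ~~ set_covered S ->
  c * harm_tail n alpha #|S| <= 1 + mean (fun T => c * harm_tail n alpha #|T|) S.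
Proof.
move=> edges_gt0 crossing_le S_ncov; set k := #|S|.
set X := (#|[set e in edges adj | crossing S e]|%:R : R).
have M_gt0 : 0 < M by rewrite ltr0n.
have drop_le : c / k%:R * X <= M.
  have [->|k_gt0] := posnP k; first by rewrite invr0 mulr0 mul0r ltW.
  by rewrite mulrAC ler_pdivrMr ?ltr0n // [M * _]mulrC.
have phi_spread e : c * harm_tail n alpha k - (crossing S e)%:R * (c / k%:R) <=
    c * harm_tail n alpha #|spread S e|.
  have [cr|ncr] := boolP (crossing S e); last by rewrite /spread (negbTE ncr) mul0r subr0.
  rewrite card_spread // (harm_tailE (card_lt_uncovered S_ncov)); last by rewrite ltNge.
  by rewrite mul1r mulrDr addrAC subrr add0r.
have sum_crossing : \sum_(e in edges adj) ((crossing S e)%:R : R) = X.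
  rewrite /X -sum1dep_card natr_sum big_mkcond [RHS]big_mkcond /=.
  by apply: eq_bigr => e _; case: (e \in edges adj); case: crossing.
apply: le_trans (_ : _ <= 1 + M^-1 * \sum_(e in edges adj)
    (c * harm_tail n alpha k - (crossing S e)%:R * (c / k%:R))) _; last first.
  by rewrite lerD2l ler_wpM2l ?invr_ge0 // ler_sum.
set a := c * harm_tail n alpha k.
rewrite sumrB sumr_const -mulr_suml sum_crossing -[a *+ _]mulr_natr (mulrC X).
set Y := c / k%:R * X in drop_le *.
have -> : M^-1 * (a * M - Y) = a - Y / M by field; rewrite gt_eqF.
have : Y / M <= 1 by rewrite ler_pdivrMr ?mul1r.
lra.
Qed.

Hypotheses (adj_sym : symmetric adj) (adj_irr : irreflexive adj).
Hypothesis adj_connected : forall i j : 'I_n, connect adj i j.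

Lemma doubling_potential_contract (S : {set 'I_n}) :
  (0 < #|S|)%N -> ~~ set_covered S ->
  mean (fun T => 2 ^+ (n - #|T|)) S <= (1 - (2 * M)^-1) * 2 ^+ (n - #|S|).
Proof.
move=> S_gt0 S_ncov; have S_lt_n := card_lt_uncovered S_ncov.
have S_range : (0 < #|S| < n)%N by rewrite S_gt0 S_lt_n.
have [e0 e0E cr0] := exists_crossing_edge adj_sym adj_irr adj_connected S_range.
have M_gt0 : 0 < M by rewrite ltr0n; apply/card_gt0P; exists e0.
set p : R := 2 ^+ (n - #|S|).
have p_ge0 : 0 <= p by rewrite exprn_ge0.
have p_spread e : 2 ^+ (n - #|spread S e|) <= p - (if e == e0 then p / 2 else 0).
  have [cr|ncr] := boolP (crossing S e).
    have -> : 2 ^+ (n - #|spread S e|) = p / 2 :> R.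
      by rewrite card_spread // /p -(subnSK S_lt_n) exprS mulrAC divff ?mul1r.
    by case: (e == e0); lra.
  have -> : (e == e0) = false by apply: contraNF ncr => /eqP ->.
  by rewrite /spread (negbTE ncr) subr0.
rewrite /mean_step; apply: le_trans (ler_wpM2l _ (ler_sum _ (fun e _ => p_spread e))) _.
  by rewrite invr_ge0.
rewrite sumrB sumr_const (bigD1 e0) //= eqxx big1 ?addr0 => [|e /andP[_ /negbTE ->] //].
suff -> : M^-1 * (p *+ #|edges adj| - p / 2) = (1 - (2 * M)^-1) * p by [].
by rewrite -mulr_natr; field; rewrite gt_eqF.
Qed.

End SupportChain.

Lemma tcov_at_ge_harm_tail (R : realType) (n : nat) (adj : rel 'I_n) (alpha c : R)
    (i : 'I_n) :
  symmetric adj -> irreflexive adj -> (forall i j : 'I_n, connect adj i j) ->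
  (1 < n)%N -> alpha <= 1 -> 0 <= c ->
  (forall S : {set 'I_n},
    c * #|[set e in edges adj | crossing S e]|%:R <= #|S|%:R * #|edges adj|%:R) ->
  ((c * harm_tail n alpha 1)%:E <= tcov_at adj alpha i)%E.
Proof.
move=> adj_sym adj_irr adj_conn n_gt1 alpha_le1 c_ge0 crossing_le.
have i_range : (0 < #|[set i]| < n)%N by rewrite cards1.
have [e0 e0E _] := exists_crossing_edge adj_sym adj_irr adj_conn i_range.
have edges_gt0 : (0 < #|edges adj|)%N by apply/card_gt0P; exists e0.
have M_ge1 : 1 <= (#|edges adj|%:R : R) by rewrite ler1n.
have unit_vec_ge0 j : 0 <= @unit_vec R n i j by rewrite /unit_vec; case: eqP.
have supp_unit_vec : supp (@unit_vec R n i) = [set i].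
  by apply/setP => j; rewrite !inE /unit_vec; case: (j == i); rewrite ?oner_eq0 ?eqxx.
have -> : harm_tail n alpha 1 = harm_tail n alpha #|supp (@unit_vec R n i)|.
  by rewrite supp_unit_vec cards1.
rewrite /tcov_at /exp_hit; under eq_eseriesr do rewrite prob_hit_at_supp //.
apply: (lyapunov_le_mean_hit edges_gt0
  (phi := fun S : {set 'I_n} => c * harm_tail n alpha #|S|) (B := c * harm_tail n alpha 0)).
- by move=> S S_cov; rewrite harm_tail_eq0 ?mulr0.
- by move=> S; apply: harm_potential_drift.
- by move=> S; rewrite ler_wpM2l // harm_tail_le.
apply: (survival_cvg0 (psi := fun S : {set 'I_n} => (2 : R) ^+ (n - #|S|))
  (lam := 1 - (2 * #|edges adj|%:R)^-1) (inv := fun S => 0 < #|S|)%N).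
- by move=> S; rewrite exprn_ege1 // ler1n.
- by rewrite subr_ge0 invf_le1 ?mulr_gt0 //; lra.
- by move=> S e; exact: spread_gt0.
- by move=> S; exact: doubling_potential_contract.
- by rewrite ltrBlDr ltrDl invr_gt0 mulr_gt0 // (lt_le_trans ltr01).
- by rewrite supp_unit_vec cards1.
Qed.

Unset Implicit Arguments.

Theorem proposition4 (R : realType) (n : nat) (adj : rel 'I_n) (C : R) :
  (0 < n)%N ->
  symmetric adj -> irreflexive adj ->
  (forall i j : 'I_n, connect adj i j) ->
  0 < C ->
  (forall i j : 'I_n, (deg adj i)%:R <= C * (deg adj j)%:R) ->
  forall eps : R, 0 < eps < 1 ->
  ((n%:R / (2 * C) * ln ((1 - eps) * n%:R))%:E <= @tcov R n adj (1 - eps))%E.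
Proof.
move=> n_gt0 adj_sym adj_irr adj_conn C_gt0 deg_ratio eps /andP[eps_gt0 eps_lt1].
set alpha := 1 - eps; set c := n%:R / (2 * C).
have c_ge0 : 0 <= c by rewrite divr_ge0 // mulr_ge0 // ltW.
have alpha_le1 : alpha <= 1 by rewrite /alpha; lra.
apply: le_trans (le_bigmax _ (tcov_at adj alpha) (Ordinal n_gt0)).
have [an_le1|an_gt1] := lerP (alpha * n%:R) 1.
  apply: (@le_trans _ _ 0%:E); first by rewrite lee_fin mulr_ge0_le0 // ln_le0.
  by apply: nneseries_ge0 => t _ _; rewrite lee_fin mulr_ge0 ?divr_ge0 ?exprn_ge0.
have an_le_n : alpha * n%:R <= n%:R by rewrite ler_piMl.
have n_gt1 : (1 < n)%N by rewrite -(ltr_nat R) (lt_le_trans an_gt1).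
apply: le_trans (tcov_at_ge_harm_tail _ adj_sym adj_irr adj_conn n_gt1 alpha_le1 c_ge0
  (degree_ratio_crossing_le adj_sym adj_irr C_gt0 deg_ratio)).
by rewrite lee_fin ler_wpM2l // ln_le_harmonic // an_le_n (lt_trans ltr01).
Qed.
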